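(* Let $a<b$ be integers. Then there is a non-split short exact sequence in $\mathcal{C}_2$ \[ 0\to(-\infty,b)\xrightarrow{f}(a,b)\xrightarrow{g}(-\infty,a)\to0. \]
   Context: Let $R=\mathbb{C}[x,y]/(x^2)$, graded with $\deg x=1$, $\deg y=-1$; $M(j)_n=M_{j+n}$. $\mathcal{C}_2$ is the exact category of finitely generated $\mathbb{Z}$-graded maximal Cohen–Macaulay $R$-modules with degree-preserving morphisms. An arc is a pair $(a,b)$ with $a\in\mathbb{Z}\cup\{-\infty\}$, $b\in\mathbb{Z}$, $a<b$; a finite arc $(a,b)$ ($a\in\mathbb{Z}$) denotes the module $(x,y^{b-a-1})(1-b)$ (where $(x,y^0)=R$), and an infinite arc $(-\infty,b)$ denotes $\mathbb{C}[y](-b)=(R/(x))(-b)$. *)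

From HB Require Import structures.
From mathcomp Require Import all_boot all_order all_algebra.
From mathcomp Require Import complex.
From mathcomp Require Import Rstruct.
Set Implicit Arguments. Unset Strict Implicit. Unset Printing Implicit Defensive.
Import Order.TTheory GRing.Theory Num.Theory.
Local Open Scope ring_scope.

Definition CC : fieldType := complex Rdefinitions.R.

(** * Z-graded modules over R = C[x,y]/(x^2), deg x = 1, deg y = -1.
   A graded R-module whose homogeneous components are finite dimensional
   (true for every finitely generated graded R-module, since each R_n has
   dimension <= 2) is encoded by:
   - [gdim n]  : the dimension of the component M_n, with a fixed basis, so
                 that M_n = 'rV[CC]_(gdim n) (row vectors);
   - [gx n]    : the matrix of multiplication by x : M_n -> M_(n+1)
                 (acting on the right of row vectors: v |-> v *m gx n);
   - [gy n]    : the matrix of multiplication by y : M_(n+1) -> M_n. *)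
Record grmod := GrMod {
  gdim : int -> nat;
  gx : forall n : int, 'M[CC]_(gdim n, gdim (n + 1));
  gy : forall n : int, 'M[CC]_(gdim (n + 1), gdim n)
}.

Definition is_grmod (M : grmod) : Prop :=
  (forall n : int, gx M n *m gx M (n + 1) = 0) /\
  (forall n : int, gy M n *m gx M n = gx M (n + 1) *m gy M (n + 1)).

Definition grhom (M N : grmod) := forall n : int, 'M[CC]_(gdim M n, gdim N n).

Definition is_grhom (M N : grmod) (f : grhom M N) : Prop :=
  (forall n : int, gx M n *m f (n + 1) = f n *m gx N n) /\
  (forall n : int, gy M n *m f n = f (n + 1) *m gy N n).

Definition is_ses (A B C : grmod) (f : grhom A B) (g : grhom B C) : Prop :=
  is_grhom f /\ is_grhom g /\
  forall n : int,
    row_free (f n) /\ row_full (g n) /\ (f n == kermx (g n))%MS.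

Definition ses_splits (A B : grmod) (f : grhom A B) : Prop :=
  exists r : grhom B A, is_grhom r /\ forall n : int, f n *m r n = 1%:M.

(** Infinite arc (-oo, b): the module C[y](-b) = (R/(x))(-b).
   Component in degree n is C[y]_(n-b), spanned by y^(b-n) when n <= b,
   zero otherwise.  x acts by 0, y maps y^(b-n-1) to y^(b-n). *)
Definition arc_inf (b : int) : grmod :=
  @GrMod (fun n => nat_of_bool (n <= b))
         (fun n => 0)
         (fun n => \matrix_(i, j) 1).

(** Finite arc (a, b): the module (x, y^(b-a-1))(1-b), where (x,y^0) = R.
   Component in degree n is I_(n+1-b), I = (x, y^(b-a-1)) ⊆ R.  Writing
   m = n+1-b, its monomial basis is
     index 0 : x y^(1-m)   (present iff m <= 1, i.e. n <= b),
     index 1 : y^(-m)      (present iff -m >= b-a-1, i.e. n <= a).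
   y maps each basis vector of degree n+1 to the basis vector of the same
   index in degree n; x kills index 0 and maps index 1 (y^(-m)) in degree n
   to index 0 (x y^(-m)) in degree n+1. *)
Definition arc_fin (a b : int) : grmod :=
  @GrMod (fun n => addn (nat_of_bool (n <= b)) (nat_of_bool (n <= a)))
         (fun n => \matrix_(i, j) ((i == 1%N :> nat) && (j == 0%N :> nat))%:R)
         (fun n => \matrix_(i, j) (i == j :> nat)%:R).

From mathcomp Require Import all_boot all_order all_algebra zify.
Import GRing.Theory.
Local Open Scope ring_scope.

(* In degree n the arc (a, b) has the basis vector e0 (the image of (-oo, b))
   when n <= b and e1 (which maps onto the generator of (-oo, a)) when n <= a,
   so the sequence is split exact degreewise.  It does not split as a sequence
   of modules: x maps e1 in degree a to e0 in degree a + 1, while x acts by 0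
   on (-oo, b), so a retraction must kill e0 in degree a + 1, which is the
   image of the generator it has to fix. *)

Lemma sum_ord_supp1 {V : nmodType} {n c : nat} {F : 'I_n -> V}
    (lt_cn : (c < n)%N) :
  (forall j : 'I_n, j != c :> nat -> F j = 0) ->
  \sum_(j < n) F j = F (Ordinal lt_cn).
Proof. by move=> F0; rewrite (bigD1 (Ordinal lt_cn)) //= big1 ?addr0. Qed.

Section IndicatorMatrices.
Variable R : pzSemiRingType.

(* The structure matrices of the arcs, for arbitrary sizes: the lemmas below
   then hold in every degree without case analysis on the sizes
   [n <= b] + [n <= a]. *)

Definition delta10_mx m n : 'M[R]_(m, n) :=
  \matrix_(i, j) ((i == 1%N :> nat) && (j == 0%N :> nat))%:R.
Definition rid_mx m n : 'M[R]_(m, n) := \matrix_(i, j) (i == j :> nat)%:R.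
Definition ones_mx m n : 'M[R]_(m, n) := \matrix_(i, j) 1.
Definition ones_col0_mx m n : 'M[R]_(m, n) :=
  \matrix_(i, j) (j == 0%N :> nat)%:R.
Definition ones_row1_mx m n : 'M[R]_(m, n) :=
  \matrix_(i, j) (i == 1%N :> nat)%:R.

Lemma mulmx_col0_row1 m n p (A : 'M[R]_(m, n)) (B : 'M[R]_(n, p)) :
    (forall i (j : 'I_n), j != 0%N :> nat -> A i j = 0) ->
    (forall (j : 'I_n) l, j != 1%N :> nat -> B j l = 0) ->
  A *m B = 0.
Proof.
move=> A0 B0; apply/matrixP => i l; rewrite !mxE big1 // => j _.
by have [j0 | /A0->] := eqVneq (j : nat) 0%N; rewrite ?mul0r // B0 ?mulr0 ?j0.
Qed.

Lemma rid_mx_delta10_comm m n k : (1 < m -> 1 < n /\ 0 < k)%N ->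
  rid_mx m n *m delta10_mx n m = delta10_mx m k *m rid_mx k m.
Proof.
move=> dims; apply/matrixP => i l; rewrite !mxE.
have [i1 | i1] := boolP (i == 1%N :> nat); last first.
  rewrite !big1 // => j _; rewrite !mxE; first by rewrite (negbTE i1) mul0r.
  by case: (i == j :> nat) / eqP => [<-|_]; rewrite ?(negbTE i1) ?mulr0 ?mul0r.
have [n1 k0] : (1 < n /\ 0 < k)%N by apply: dims; case: i i1 => -[|[|?]].
rewrite (sum_ord_supp1 n1) ?(sum_ord_supp1 k0) => [|j|j]; rewrite !mxE ?i1 /=.
- by rewrite eq_sym.
- by move/negbTE->; rewrite mul0r.
- by move/negbTE->; rewrite mulr0.
Qed.

Lemma ones_mx_ones_col0_comm m n k p : (0 < k -> m = 1 /\ 0 < p)%N ->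
  ones_mx k m *m ones_col0_mx m n = ones_col0_mx k p *m rid_mx p n.
Proof.
move=> dims; apply/matrixP => i l; rewrite !mxE.
have [-> p0] : (m = 1 /\ 0 < p)%N by apply: dims; case: k i => [[]|].
rewrite big_ord1 (sum_ord_supp1 p0) => [|j]; rewrite !mxE /=.
  by rewrite mul1r mul1r eq_sym.
by move/negbTE->; rewrite mul0r.
Qed.

Lemma rid_mx_ones_row1_comm m n k p : (1 < p -> 1 < n /\ k = 1)%N ->
  rid_mx p n *m ones_row1_mx n m = ones_row1_mx p k *m ones_mx k m.
Proof.
move=> dims; apply/matrixP => i l; rewrite !mxE.
have [i1 | i1] := boolP (i == 1%N :> nat); last first.
  rewrite !big1 // => j _; rewrite !mxE; first by rewrite (negbTE i1) mul0r.
  by case: (i == j :> nat) / eqP => [<-|_]; rewrite ?(negbTE i1) ?mulr0 ?mul0r.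
have [n1 ->] : (1 < n /\ k = 1)%N by apply: dims; case: i i1 => -[|[|?]].
rewrite big_ord1 (sum_ord_supp1 n1) => [|j]; rewrite !mxE ?i1 //.
by move/negbTE->; rewrite mulr0.
Qed.

Lemma ones_col0_mx_row_mx p q : (p <= 1)%N ->
  ones_col0_mx p (p + q) = row_mx 1%:M 0.
Proof.
move=> p1; apply/matrixP => i j; rewrite !mxE.
have i0 : i = 0%N :> nat by move: (ltn_ord i); lia.
case: splitP => j' ->; rewrite !mxE /=.
  have -> : j' = i by apply/val_inj => /=; move: (ltn_ord j'); lia.
  by rewrite eqxx i0.
have p0 : (p == 0)%N = false by move: (ltn_ord i); lia.
by rewrite addn_eq0 p0.
Qed.

Lemma ones_row1_mx_col_mx p q : (q <= p <= 1)%N ->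
  ones_row1_mx (p + q) q = col_mx 0 1%:M.
Proof.
move=> qp1; apply/matrixP => i j; rewrite !mxE.
have [j0 p1] : j = 0%N :> nat /\ p = 1%N by move: (ltn_ord j); lia.
case: splitP => i' ->; rewrite !mxE /=.
  by have -> : (i' == 1%N :> nat) = false by move: (ltn_ord i'); lia.
have -> : i' = j by apply/val_inj => /=; move: (ltn_ord i'); lia.
by rewrite p1 j0 !eqxx.
Qed.

End IndicatorMatrices.

Lemma ones_col0_mx_no_retraction {R : nzRingType} {m n k} {r : 'M[R]_(n, k)} :
    delta10_mx R m n *m r = 0 ->
  (1 < m)%N -> (0 < n)%N -> (0 < k)%N -> ones_col0_mx R k n *m r <> 1%:M.
Proof.
move=> /matrixP xr0 m1 n0 k0; move: (xr0 (Ordinal m1) (Ordinal k0)).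
rewrite !mxE (sum_ord_supp1 n0) => [|j]; rewrite !mxE /=; last first.
  by move/negbTE->; rewrite mul0r.
rewrite mulr1n mul1r => r00 /matrixP/(_ (Ordinal k0) (Ordinal k0)).
rewrite !mxE (sum_ord_supp1 n0) => [|j]; rewrite !mxE /=; last first.
  by move/negbTE->; rewrite mul0r.
by rewrite mulr1n mul1r r00 => /eqP; rewrite eq_sym oner_eq0.
Qed.

Lemma row_mx_col_mx_exact (F : fieldType) p q :
  row_free (row_mx 1%:M 0 : 'M[F]_(p, p + q)) /\
  row_full (col_mx 0 1%:M : 'M[F]_(p + q, q)) /\
  (row_mx 1%:M 0 == kermx (col_mx 0 1%:M : 'M[F]_(p + q, q)))%MS.
Proof.
have fg0 : (row_mx 1%:M 0 <= kermx (col_mx 0 1%:M : 'M[F]_(p + q, q)))%MS.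
  by rewrite sub_kermx mul_row_col mul1mx mul0mx addr0.
rewrite /row_free /row_full -(mxrank_leqif_eq fg0).2 mxrank_ker.
by rewrite rank_row_mx0 rank_col_0mx !mxrank1 addnK !eqxx.
Qed.

Lemma arc_inf_grmod b : is_grmod (arc_inf b).
Proof. by split=> n; rewrite /= ?mul0mx ?mulmx0. Qed.

Lemma arc_fin_grmod a b : a < b -> is_grmod (arc_fin a b).
Proof.
move=> ab; split=> n /=.
  apply: (mulmx_col0_row1 CC) => [i j | j l] /negbTE j0;
    by rewrite mxE j0 ?andbF.
by apply: (rid_mx_delta10_comm CC); lia.
Qed.

Definition arc_incl a b : grhom (arc_inf b) (arc_fin a b) :=
  fun n => ones_col0_mx CC _ _.

Definition arc_proj a b : grhom (arc_fin a b) (arc_inf a) :=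
  fun n => ones_row1_mx CC _ _.

Lemma arc_incl_grhom a b : is_grhom (arc_incl a b).
Proof.
split=> n /=; rewrite /arc_incl.
  rewrite mul0mx; apply/esym/(mulmx_col0_row1 CC) => [i j | j l] /negbTE j0;
    by rewrite mxE j0 ?andbF.
by apply: (ones_mx_ones_col0_comm CC); lia.
Qed.

Lemma arc_proj_grhom a b : is_grhom (arc_proj a b).
Proof.
split=> n /=; rewrite /arc_proj.
  rewrite mulmx0; apply/(mulmx_col0_row1 CC) => [i j | j l] /negbTE j0;
    by rewrite mxE j0 ?andbF.
by apply: (rid_mx_ones_row1_comm CC); lia.
Qed.

Lemma arc_ses a b : a < b -> is_ses (arc_incl a b) (arc_proj a b).
Proof.
move=> ab; split; [exact: arc_incl_grhom | split; first exact: arc_proj_grhom].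
move=> n; rewrite /arc_incl /arc_proj /= ones_col0_mx_row_mx;
  rewrite ?ones_row1_mx_col_mx; try lia.
exact: row_mx_col_mx_exact.
Qed.

Lemma arc_incl_nonsplit a b : a < b -> ~ ses_splits (arc_incl a b).
Proof.
move=> ab [r [[rx _] rf]]; move: (rx a); rewrite /= mulmx0 => xr0.
by apply: (ones_col0_mx_no_retraction (R := CC) xr0 _ _ _ (rf (a + 1))); lia.
Qed.

Theorem lemma4p6 (a b : int) (hab : a < b) :
  is_grmod (arc_inf b) /\ is_grmod (arc_fin a b) /\ is_grmod (arc_inf a) /\
  exists (f : grhom (arc_inf b) (arc_fin a b)) (g : grhom (arc_fin a b) (arc_inf a)),
    is_ses f g /\ ~ ses_splits f.
Proof.
split; first exact: arc_inf_grmod.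
split; first exact: arc_fin_grmod.
split; first exact: arc_inf_grmod.
exists (arc_incl a b), (arc_proj a b).
by split; [exact: arc_ses | exact: arc_incl_nonsplit].
Qed.
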